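(* For every integer $d\ge 0$ define $\Phi_d:(\mathbb{R}_{\ge 0})^d\to\mathbb{R}[x]$ recursively by \[ \Phi_d(t_0,\ldots,t_{d-1})=\begin{cases}1 & d=0,\\ x+t_0 & d=1,\\ (x-t_{d-2})^2\,\Phi_{d-2}(t_0,\ldots,t_{d-3})+t_{d-1}x & d\ge 2.\end{cases} \] Then for every $d\ge 0$, $\Phi_d$ maps $(\mathbb{R}_{\ge 0})^d$ into $\mathcal{C}_d$, $\Phi_d:(\mathbb{R}_{\ge0})^d\to\mathcal{C}_d$ is surjective, and $\Phi_d$ is generically injective: there is a subset $N\subseteq(\mathbb{R}_{\ge 0})^d$ of Lebesgue measure zero such that the restriction of $\Phi_d$ to $(\mathbb{R}_{\ge0})^d\setminus N$ is injective.
   Context: A polynomial $f\in\mathbb{R}[x]$ is called copositive if $f(x)\ge 0$ for all real $x\ge 0$. $F_d$ denotes the set of monic polynomials in $\mathbb{R}[x]$ of degree exactly $d$, and $\mathcal{C}_d=\{f\in F_d: f \text{ copositive}\}$. For $d=0$, $(\mathbb{R}_{\ge0})^0$ is a single point and $\mathcal{C}_0=\{1\}$. *)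

From mathcomp Require Import all_boot all_order all_algebra.
From mathcomp Require Import reals.
Set Implicit Arguments. Unset Strict Implicit. Unset Printing Implicit Defensive.
Import Order.TTheory GRing.Theory Num.Theory.
Local Open Scope ring_scope.

Section Defs.
Variable R : realType.

(* Recursion of Phi on the REVERSED parameter list:
   phi_rev [:: t_{d-1}, t_{d-2}, ..., t_0]
     = (X - t_{d-2})^2 * phi_rev [:: t_{d-3}, ..., t_0] + t_{d-1} X. *)
Fixpoint phi_rev (s : seq R) : {poly R} :=
  match s with
  | [::] => 1
  | [:: a] => 'X + a%:P
  | a :: b :: r => ('X - b%:P) ^+ 2 * phi_rev r + a *: 'X
  end.

Definition Phi (d : nat) (t : d.-tuple R) : {poly R} := phi_rev (rev t).

Definition nonneg_tuple (d : nat) (t : d.-tuple R) : Prop :=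
  forall i : 'I_d, 0 <= tnth t i.

Definition copositive (p : {poly R}) : Prop := forall x : R, 0 <= x -> 0 <= p.[x].

Definition in_Cd (d : nat) (p : {poly R}) : Prop :=
  [/\ p \is monic, size p = d.+1 & copositive p].

Definition in_box (d : nat) (a b x : d.-tuple R) : Prop :=
  forall i : 'I_d, tnth a i <= tnth x i /\ tnth x i <= tnth b i.

Definition box_vol (d : nat) (a b : d.-tuple R) : R :=
  \prod_(i < d) Num.max 0 (tnth b i - tnth a i).

(* Lebesgue null set in R^d: for every eps > 0, N is covered by countably many
   closed boxes (a sequence; None = no box) with total volume <= eps. *)
Definition lebesgue_null (d : nat) (N : d.-tuple R -> Prop) : Prop :=
  forall eps : R, 0 < eps ->
  exists B : nat -> option (d.-tuple R * d.-tuple R),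
    (forall x, N x -> exists k ab, B k = Some ab /\ in_box ab.1 ab.2 x) /\
    (forall n : nat,
        \sum_(k < n) (match B k with Some ab => box_vol ab.1 ab.2 | None => 0 end)
        <= eps).

End Defs.

From mathcomp Require Import all_boot all_order all_algebra.
From mathcomp Require Import boolp classical_sets reals topology normedtype derive.
From mathcomp Require Import polyrcf lra.
Import Order.TTheory GRing.Theory Num.Theory numFieldNormedType.Exports.
Set Implicit Arguments.
Unset Strict Implicit.
Unset Printing Implicit Defensive.
Local Open Scope ring_scope.

(* Surjectivity peels off one step of the recursion at a time.  For a monic
   copositive p of degree at least 2, let A be the largest slope with
   p - A x still copositive.  Then g = p - A x must vanish to second order at
   some b >= 0: otherwise g stays positive on (0, +oo) and either g(0) > 0 or
   g = x g1 with g1(0) > 0, and in both cases compactness and growth at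
   infinity give g >= u x for some u > 0, contradicting the maximality of A.
   Hence p = (x - b)^2 q + A x with q monic and copositive.
   Injectivity holds on parameters that are all positive: evaluating two
   representations at each other's b shows (a - a') b >= 0 and
   (a' - a) b' >= 0, so the outer parameters agree and one recurses.  The
   exceptional set is a finite union of coordinate hyperplanes. *)

Lemma seq_ind2 (T : Type) (P : seq T -> Prop) :
  P [::] -> (forall a, P [:: a]) -> (forall a b s, P s -> P [:: a, b & s]) ->
  forall s, P s.
Proof.
move=> P0 P1 PS s; suff [] : P s /\ forall a, P (a :: s) by [].
by elim: s => [|b s [Ps Pbs]]; split => // a; apply: PS.
Qed.

Section RealClosedField.
Variable R : rcfType.
Implicit Types (p : {poly R}) (b c : R).

Lemma horner_ge0_right p b c : b < c ->
  (forall y, b < y < c -> 0 <= p.[y]) -> 0 <= p.[b].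
Proof.
move=> bc p_ge0; rewrite leNgt; apply/negP => pb.
have [|d d0 near_b] := @poly_cont _ b p (- p.[b]); first by rewrite oppr_gt0.
pose y := b + Num.min d (c - b) / 2.
have m0 : 0 < Num.min d (c - b) by rewrite lt_min d0 subr_gt0.
have md : Num.min d (c - b) <= d by rewrite ge_min lexx.
have mc : Num.min d (c - b) <= c - b by rewrite ge_min lexx orbT.
have := p_ge0 y; have := near_b y; rewrite /y addrAC subrr add0r ger0_norm; last lra.
rewrite ltr_norml; lra.
Qed.

Lemma horner_ge0_left p b c : c < b ->
  (forall y, c < y < b -> 0 <= p.[y]) -> 0 <= p.[b].
Proof.
move=> cb p_ge0; have -> : p.[b] = (p \Po - 'X).[- b] by rewrite horner_comp !hornerE opprK.
apply: (@horner_ge0_right _ _ (- c)); first by rewrite ltrN2.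
by move=> y /andP[ly yc]; rewrite horner_comp !hornerE p_ge0 // ltrNr ltrNl ly yc.
Qed.

End RealClosedField.

Section Copositive.
Variable R : realType.
Implicit Types (p q g h : {poly R}) (a b x : R).

Lemma copositive_root_dvdp_sqr g b : 0 < b -> copositive g -> root g b ->
  ('X - b%:P) ^+ 2 %| g.
Proof.
move=> b_gt0 cg /factor_theorem [g1 Eg].
have g_val y : g.[y] = g1.[y] * (y - b) by rewrite Eg hornerM hornerXsubC.
have g1b_ge0 : 0 <= g1.[b].
  apply: (@horner_ge0_right _ _ b (b + 1)) => [|y /andP[b_lt_y _]]; first lra.
  have := cg y; rewrite g_val; nra.
have g1b_le0 : 0 <= (- g1).[b].
  apply: (@horner_ge0_left _ _ b 0) => // y /andP[y0 yb].
  have := cg y; rewrite g_val hornerN; nra.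
have /factor_theorem [q Eg1] : root g1 b.
  by rewrite rootE eq_le g1b_ge0 andbT -oppr_ge0 -hornerN.
by rewrite Eg Eg1 -mulrA -expr2 dvdp_mull.
Qed.

Lemma copositive_mul_sqr_XsubC q b : 0 <= b ->
  copositive (q * ('X - b%:P) ^+ 2) -> copositive q.
Proof.
move=> b_ge0 cg.
have off_b x : 0 <= x -> x != b -> 0 <= q.[x].
  move=> x_ge0 xb; have := cg x x_ge0; rewrite hornerM horner_exp hornerXsubC.
  by rewrite pmulr_lge0 // exprn_even_gt0 // subr_eq0.
move=> x x_ge0; have [->|xb] := eqVneq x b; last exact: off_b.
apply: (@horner_ge0_right _ _ b (b + 1)) => [|y /andP[b_lt_y _]]; first lra.
by apply: off_b; [lra | rewrite gt_eqF].
Qed.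

Lemma poly_gt0_ge_const h : 0 < lead_coef h -> (1 < size h)%N ->
  (forall x, 0 <= x -> 0 < h.[x]) ->
  exists2 e, 0 < e & forall x, 0 <= x -> e <= h.[x].
Proof.
move=> lc_gt0 size_h h_gt0.
have [M h_ge1] := poly_lim_infty 1 lc_gt0 size_h.
have M'_ge0 : 0 <= Num.max M 0 by rewrite le_max lexx orbT.
have [|c c_in c_min] := EVT_min (f := horner h) M'_ge0.
  by apply: continuous_subspaceT => x; exact: continuous_horner.
move: c_in; rewrite in_itv /= => /andP[c_ge0 _].
exists (Num.min 1 h.[c]); first by rewrite lt_min ltr01 h_gt0.
move=> x x_ge0; rewrite ge_min; case: (leP x (Num.max M 0)) => xM.
- by rewrite c_min ?orbT // in_itv /= x_ge0.
- by rewrite h_ge1 // ltW // (le_lt_trans _ xM) // le_max lexx.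
Qed.

Lemma poly_gt0_ge_linear h : 0 < lead_coef h -> (2 < size h)%N ->
  (forall x, 0 <= x -> 0 < h.[x]) ->
  exists2 u, 0 < u & forall x, 0 <= x -> u * x <= h.[x].
Proof.
move=> lc_gt0 size_h h_gt0.
have [e e_gt0 h_ge_e] := poly_gt0_ge_const lc_gt0 (ltnW size_h) h_gt0.
have size_X : (size (- 'X : {poly R}) < size h)%N by rewrite size_polyN size_polyX.
have [M h_ge_id] : exists M, forall x, M <= x -> 0 <= (h - 'X).[x].
  by apply: poly_lim_infty; rewrite ?lead_coefDl ?size_polyDl // ltnW.
pose M' := Num.max M 1.
have M'_ge1 : 1 <= M' by rewrite le_max lexx orbT.
exists (Num.min 1 (e / M')); first by rewrite lt_min ltr01 divr_gt0 //; lra.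
have eM' : e / M' * M' = e by rewrite divfK // gt_eqF //; lra.
move=> x x_ge0; case: (leP x M') => xM.
- have := h_ge_e x x_ge0; have : Num.min 1 (e / M') <= e / M' by rewrite ge_min lexx orbT.
  have : 0 <= e / M' by rewrite divr_ge0 // ltW //; lra.
  nra.
- have := h_ge_id x; rewrite !hornerE => /(_ _).
  have : Num.min 1 (e / M') <= 1 by rewrite ge_min lexx.
  have : M <= x by apply: le_trans (ltW xM); rewrite le_max lexx.
  nra.
Qed.

Lemma copositive_subX_no_double_root g : g \is monic -> (2 < size g)%N -> copositive g ->
  (forall b, 0 <= b -> ~ ('X - b%:P) ^+ 2 %| g) ->
  exists2 u, 0 < u & copositive (g - u *: 'X).
Proof.
move=> g_monic size_g cg no_double_root.
suff [u u_gt0 g_ge] : exists2 u, 0 < u & forall x, 0 <= x -> u * x <= g.[x].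
  by exists u => // x x_ge0; rewrite !hornerE subr_ge0 g_ge.
have g_gt0 x : 0 < x -> 0 < g.[x].
  move=> x_gt0; rewrite lt_def cg ?ltW // andbT; apply: contraPneq no_double_root.
  move=> gx0 /(_ x (ltW x_gt0)); apply.
  by apply: copositive_root_dvdp_sqr; rewrite ?rootE ?gx0.
have lc_gt0 : 0 < lead_coef g by rewrite (monicP g_monic).
have [g0_eq0|g0_neq0] := eqVneq g.[0] 0; last first.
  apply: poly_gt0_ge_linear => // x; rewrite le_eqVlt => /predU1P[<-|/g_gt0//].
  by rewrite lt_def g0_neq0 cg.
have /factor_theorem [g1 Eg] : root g 0 by rewrite rootE g0_eq0.
rewrite subr0 in Eg.
have g1_gt0 x : 0 < x -> 0 < g1.[x].
  by move=> x_gt0; have := g_gt0 x x_gt0; rewrite Eg hornerMX pmulr_lgt0.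
have g1_0 : 0 < g1.[0].
  rewrite lt_def; apply/andP; split.
    apply: contraPneq (no_double_root 0 (lexx 0)) => g1_0.
    have /factor_theorem [q Eg1] : root g1 0 by rewrite rootE g1_0.
    by rewrite Eg Eg1 subr0 -mulrA -expr2 dvdp_mull.
  apply: (@horner_ge0_right _ _ 0 1) => // y /andP[y_gt0 _].
  exact/ltW/g1_gt0.
have g1_monic : g1 \is monic by rewrite -(monicMr g1 (monicX R)) -Eg.
have [|||e e_gt0 g1_ge_e] := @poly_gt0_ge_const g1.
- by rewrite (monicP g1_monic).
- by move: size_g; rewrite Eg size_mulX ?monic_neq0.
- by move=> x; rewrite le_eqVlt => /predU1P[<- //|/g1_gt0].
- by exists e => // x x_ge0; rewrite Eg hornerMX ler_wpM2r // g1_ge_e.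
Qed.

Lemma copositive_max_slope p : copositive p ->
  exists2 A, 0 <= A & copositive (p - A *: 'X) /\
    forall u, 0 < u -> ~ copositive (p - (A + u) *: 'X).
Proof.
move=> cp.
pose S := [set a | 0 <= a /\ copositive (p - a *: 'X)]%classic.
have S0 : S 0 by split; rewrite // scale0r subr0.
have S_le a : S a -> forall x, 0 <= x -> a * x <= p.[x].
  by move=> [_ ca] x /ca; rewrite !hornerE subr_ge0.
have S_sup : has_sup S.
  by split; [exists 0 | exists p.[1] => a /S_le/(_ 1 ler01); rewrite mulr1].
have A_ge0 : 0 <= sup S by exact: sup_upper_bound.
exists (sup S) => //; split.
  move=> x; rewrite !hornerE subr_ge0 le_eqVlt => /predU1P[<-|x_gt0].
    by rewrite mulr0 cp.
  rewrite -ler_pdivlMr //; apply: ge_sup => [|a Sa]; first by exists 0.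
  by rewrite ler_pdivlMr // S_le // ltW.
move=> u u_gt0 cAu.
have : S (sup S + u) by split; [exact: addr_ge0 (ltW u_gt0) | ].
move/(sup_upper_bound S_sup); lra.
Qed.

Lemma copositive_decomp p : p \is monic -> (2 < size p)%N -> copositive p ->
  exists a b q, [/\ 0 <= a, 0 <= b, q \is monic, copositive q
                 & p = ('X - b%:P) ^+ 2 * q + a *: 'X].
Proof.
move=> p_monic size_p cp.
have [A A_ge0 [cg A_max]] := copositive_max_slope cp.
have size_AX : (size (- (A *: 'X : {poly R})) < size p)%N.
  by rewrite size_polyN (leq_ltn_trans (size_scale_leq _ _)) // size_polyX.
have g_monic : p - A *: 'X \is monic by rewrite monicE lead_coefDl // -monicE.
have size_g : size (p - A *: 'X) = size p by rewrite size_polyDl.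
have [[b [b_ge0 /dvdpP[q Eg]]]|no_double_root] :=
  pselect (exists b, 0 <= b /\ ('X - b%:P) ^+ 2 %| p - A *: 'X).
- have sqr_monic : ('X - b%:P) ^+ 2 \is monic by rewrite monic_exp ?monicXsubC.
  exists A, b, q; split => //.
  + by rewrite -(monicMr q sqr_monic) -Eg.
  + by move: cg; rewrite Eg; exact: copositive_mul_sqr_XsubC.
  + by rewrite mulrC -Eg subrK.
- have [u u_gt0 cgu] : exists2 u, 0 < u & copositive (p - A *: 'X - u *: 'X).
    apply: copositive_subX_no_double_root; rewrite ?size_g // => b b_ge0 dvd.
    by apply: no_double_root; exists b.
  by case: (A_max u u_gt0); rewrite scalerDl opprD addrA.
Qed.

End Copositive.

Lemma phi_step_params_eq (R : realDomainType) (a a' b b' c c' : R) :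
  0 < b -> 0 < b' -> 0 < c -> 0 < c' ->
  a * b = (b - b') ^+ 2 * c' + a' * b -> (b' - b) ^+ 2 * c + a * b' = a' * b' ->
  a = a' /\ b = b'.
Proof.
move=> b_gt0 b'_gt0 c_gt0 c'_gt0 eq_b eq_b'.
have sq_ge0 : 0 <= (b - b') ^+ 2 * c' /\ 0 <= (b' - b) ^+ 2 * c.
  by split; rewrite mulr_ge0 ?sqr_ge0 ?ltW.
have a_eq : a = a' by apply/le_anti/andP; split; nra.
split => //; move: eq_b; rewrite a_eq -{1}[a' * b]add0r => /addIr/esym/eqP.
by rewrite mulf_eq0 (gt_eqF c'_gt0) orbF sqrf_eq0 subr_eq0 => /eqP.
Qed.

Section Phi.
Variable R : realType.
Implicit Types (q : {poly R}) (s t : seq R) (a b : R).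

Lemma phi_step_monic_size a b q : q \is monic ->
  ('X - b%:P) ^+ 2 * q + a *: 'X \is monic /\
  size (('X - b%:P) ^+ 2 * q + a *: 'X) = (size q).+2.
Proof.
move=> q_monic; have sqr_monic : ('X - b%:P) ^+ 2 \is monic.
  by rewrite monic_exp ?monicXsubC.
have size_sqrq : size (('X - b%:P) ^+ 2 * q) = (size q).+2.
  by rewrite size_monicM ?monic_neq0 // size_exp_XsubC.
have size_aX : (size (a *: 'X : {poly R}) < size (('X - b%:P) ^+ 2 * q)%R)%N.
  rewrite (leq_ltn_trans (size_scale_leq a 'X)) // size_sqrq size_polyX.
  by move: (monic_neq0 q_monic); rewrite -size_poly_eq0; case: (size q).
by rewrite monicE lead_coefDl // -monicE monicMl // size_polyDl.
Qed.

Lemma phi_rev_in_Cd s : all (>= 0) s -> in_Cd (size s) (phi_rev s).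
Proof.
elim/seq_ind2: s => [|a|a b s IH] /=.
- by split; rewrite ?monic1 ?size_poly1 // => x _; rewrite hornerE.
- rewrite andbT => a_ge0; split; rewrite ?monicXaddC ?size_XaddC // => x x_ge0.
  by rewrite !hornerE addr_ge0.
- case/and3P => a_ge0 b_ge0 /IH[q_monic size_q cq].
  have [phi_monic size_phi] := phi_step_monic_size a b q_monic.
  split; rewrite ?size_phi ?size_q // => x x_ge0.
  by rewrite !hornerE addr_ge0 // mulr_ge0 ?sqr_ge0 ?cq.
Qed.

Lemma phi_rev_gt0 s x : all (> 0) s -> 0 <= x -> 0 < (phi_rev s).[x].
Proof.
elim/seq_ind2: s => [|a|a b s IH] /=; first by rewrite hornerE.
  by rewrite andbT => a_gt0 x_ge0; rewrite !hornerE; exact: ltr_wpDl.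
case/and3P => a_gt0 b_gt0 /IH q_gt0 x_ge0; have {}q_gt0 := q_gt0 x_ge0.
rewrite !hornerE; have [x0|x_neq0] := eqVneq x 0.
  rewrite x0 in q_gt0 *; rewrite mulr0 addr0 sub0r sqrrN.
  by rewrite mulr_gt0 // exprn_gt0.
apply: ltr_wpDl; first by rewrite mulr_ge0 ?sqr_ge0 ?ltW.
by rewrite mulr_gt0 // lt_def x_neq0.
Qed.

Lemma phi_rev_inj s t : size s = size t -> all (> 0) s -> all (> 0) t ->
  phi_rev s = phi_rev t -> s = t.
Proof.
elim/seq_ind2: s t => [|a|a b s IH] [|a' [|b' t]] //=.
  by move=> _ _ _ /addrI/polyC_inj ->.
move=> [size_st] /and3P[a_gt0 b_gt0 s_gt0] /and3P[a'_gt0 b'_gt0 t_gt0] E.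
have E_at y : _ := congr1 (horner^~ y) E.
move: (E_at b) (E_at b'); rewrite /= !hornerE !subrr expr0n /= !mul0r !add0r => eq_b eq_b'.
have [a_eq b_eq] := phi_step_params_eq b_gt0 b'_gt0
  (phi_rev_gt0 s_gt0 (ltW b'_gt0)) (phi_rev_gt0 t_gt0 (ltW b_gt0)) eq_b eq_b'.
subst a' b'.
have sqr_neq0 : ('X - b%:P) ^+ 2 != 0 by rewrite expf_neq0 // polyXsubC_eq0.
by rewrite (IH t size_st s_gt0 t_gt0 (mulfI sqr_neq0 (addIr _ E))).
Qed.

End Phi.

Lemma in_Cd_phi_rev (R : realType) d (p : {poly R}) : in_Cd d p ->
  exists s, [/\ size s = d, all (>= 0) s & phi_rev s = p].
Proof.
elim/ltn_ind: d p => -[|[|d]] IH p [p_monic size_p cp].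
- have p0 : p`_0 = 1 by move/monicP: p_monic; rewrite lead_coefE size_p.
  by exists [::]; rewrite /= (size1_polyC (eq_leq size_p)) p0.
- have p_eq : p = 'X + (p`_0)%:P.
    apply/polyP => -[|[|i]]; rewrite coefD coefX coefC /= ?add0r ?addr0 //.
      by move/monicP: p_monic; rewrite lead_coefE size_p.
    by rewrite nth_default // size_p.
  exists [:: p`_0]; split; [by [] | | exact: esym p_eq].
  by rewrite /= andbT -horner_coef0; apply: cp.
- have size_gt2 : (2 < size p)%N by rewrite size_p.
  have [a [b [q [a_ge0 b_ge0 q_monic cq Ep]]]] := copositive_decomp p_monic size_gt2 cp.
  have [_ size_phi] := phi_step_monic_size a b q_monic.
  have size_q : size q = d.+1 by apply/succn_inj/succn_inj; rewrite -size_phi -Ep.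
  have [s [size_s s_ge0 Es]] := IH d (ltnW (ltnSn _)) q (And3 q_monic size_q cq).
  by exists [:: a, b & s]; rewrite /= size_s a_ge0 b_ge0 s_ge0 Es Ep.
Qed.

Lemma lebesgue_null_coord_eq0 (R : realType) d :
  lebesgue_null (fun t : d.-tuple R => exists i, tnth t i = 0).
Proof.
move=> eps eps_gt0.
pose lo (i : 'I_d) (n : nat) := [tuple (if j == i then 0 else - n%:R : R) | j < d].
pose hi (i : 'I_d) (n : nat) := [tuple (if j == i then 0 else n%:R : R) | j < d].
exists (fun k => if @unpickle ('I_d * nat)%type k is Some (i, n)
                 then Some (lo i n, hi i n) else None); split.
- move=> x [i xi]; pose n := Num.bound (\sum_j `|tnth x j|).
  exists (pickle (i, n)), (lo i n, hi i n); rewrite pickleK; split => // j /=.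
  rewrite !tnth_mktuple; have [->|ji] := eqVneq j i; first by rewrite xi lexx.
  have : `|tnth x j| <= n%:R.
    apply: (le_trans _ (ltW (archi_boundP _))); last exact: sumr_ge0.
    by rewrite (bigD1 j) //= lerDl sumr_ge0.
  by rewrite ler_norml => /andP.
- move=> n; rewrite big1 ?ltW // => k _.
  case: (unpickle k) => [[i m]|] //=.
  by rewrite /box_vol (bigD1 i) //= !tnth_mktuple eqxx subrr maxxx mul0r.
Qed.

Theorem theorem1 (R : realType) (d : nat) :
  (forall t : d.-tuple R, nonneg_tuple t -> in_Cd d (Phi t)) /\
  (forall p : {poly R}, in_Cd d p -> exists t : d.-tuple R, nonneg_tuple t /\ Phi t = p) /\
  (exists N : d.-tuple R -> Prop,
      lebesgue_null N /\
      (forall s t : d.-tuple R, nonneg_tuple s -> nonneg_tuple t -> ~ N s -> ~ N t ->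
         Phi s = Phi t -> s = t)).
Proof.
split; [|split].
- move=> t /all_tnthP t_ge0; have := @phi_rev_in_Cd R (rev t).
  by rewrite size_rev size_tuple all_rev; apply.
- move=> p /in_Cd_phi_rev[s [size_s s_ge0 <-]].
  have size_rs : size (rev s) == d by rewrite size_rev size_s.
  exists (Tuple size_rs); split; first by apply/all_tnthP; rewrite all_rev.
  by rewrite /Phi /= revK.
- pose N (t : d.-tuple R) := exists i, tnth t i = 0.
  have all_gt0 (t : d.-tuple R) : nonneg_tuple t -> ~ N t -> all (> 0) (rev t).
    move=> t_ge0 t_ne; rewrite all_rev; apply/all_tnthP => i.
    by rewrite lt_def t_ge0 andbT; apply/eqP => ti; apply: t_ne; exists i.
  exists N; split; first exact: lebesgue_null_coord_eq0.
  move=> s t s_ge0 t_ge0 s_ne t_ne E; apply/val_inj/(can_inj revK).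
  by apply: phi_rev_inj E; rewrite ?size_rev ?size_tuple ?all_gt0.
Qed.
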